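(* Let $\mathcal C$ be an $\mathbb F_q$-conic in a Baer subplane $\mathcal B$ of $\mathrm{PG}(2,q^2)$ that is secant to $\ell_\infty$, and let the $\mathbb F_{q^2}$-conic $\mathcal C^+$ meet $\ell_\infty$ in the points $\bar P,\bar Q$ (possibly equal). Then in $\mathrm{PG}(4,q)$, $[\mathcal C]$ is a non-degenerate conic in the plane $[\mathcal B]$, and $[\mathcal C^+]\cap\Sigma_\infty=[P]\cup[Q]$. Moreover: (1) if $\bar P=\bar Q$ then $\bar P\in\mathcal B$ and $[\mathcal C]$ meets $\Sigma_\infty$ in the single point $[P]\cap[\mathcal B]$; (2) if $\bar P\ne\bar Q$ and $\bar P,\bar Q\in\mathcal B$, then $[\mathcal C]$ meets $\Sigma_\infty$ in the two points $[P]\cap[\mathcal B]$ and $[Q]\cap[\mathcal B]$; (3) if $\bar P\neq\bar Q$ and $\bar P,\bar Q\notin\mathcal B$, then $[\mathcal C]$ is a $(PQ^q)$-special conic.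
   Context: Bruck–Bose setting: $q$ a prime power; $\Sigma_\infty$ a hyperplane of $\mathrm{PG}(4,q)$ with regular spread $\mathcal S$; affine points $A$ of $\mathrm{PG}(2,q^2)$ correspond to points $[A]$ of $\mathrm{PG}(4,q)\setminus\Sigma_\infty$, points $\bar T\in\ell_\infty$ to spread lines $[T]$, lines $\ne\ell_\infty$ to planes not in $\Sigma_\infty$ containing a spread line. In $\mathrm{PG}(4,q^2)$ the transversals of $\mathcal S$ are conjugate lines $g,g^q$ (conjugation $X\mapsto X^q$ of coordinates) with $[T]^\star=TT^q$ where $T=[T]^\star\cap g$; $\mathcal V^\star$ denotes the extension to $\mathrm{PG}(4,q^2)$ of a set defined by equations over $\mathbb F_q$. An $\mathbb F_{q^2}$-conic is a non-degenerate conic of $\mathrm{PG}(2,q^2)$; an $\mathbb F_q$-conic is a non-degenerate conic of a Baer subplane; for an $\mathbb F_q$-conic $\mathcal C$, $\mathcal C^+$ is the unique $\mathbb F_{q^2}$-conic containing it. For a non-degenerate conic $\mathcal O$ of $\mathrm{PG}(2,q^2)$ with equation $f=0$, writing $f=f_\infty+\tau f_0$ after substituting $x=x_0+x_1\tau$, $y=y_0+y_1\tau$ ($\tau$ a primitive element of $\mathbb F_{q^2}$, $f_\infty,f_0$ quadratic forms over $\mathbb F_q$ in $(x_0,x_1,y_0,y_1,z)$), $[\mathcal O]$ is the intersection of the quadrics $f_\infty=0$, $f_0=0$ of $\mathrm{PG}(4,q)$; its affine points are the $[A]$, $A\in\mathcal O$ affine. For a Baer subplane $\mathcal B$ secant to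 $\ell_\infty$ (meeting it in a Baer subline), $[\mathcal B]$ is the plane of $\mathrm{PG}(4,q)$, not in $\Sigma_\infty$ and containing no spread line, whose affine points are the $[X]$, $X$ affine in $\mathcal B$; for $\mathcal C\subset\mathcal B$, $[\mathcal C]$ denotes the closure in $[\mathcal B]$ of $\{[X]: X\in\mathcal C \text{ affine}\}$ (its points on $\Sigma_\infty$ being $[T]\cap[\mathcal B]$ for $\bar T\in\mathcal C\cap\ell_\infty$). For distinct points $P,Q\in g$, a non-degenerate conic $\mathcal N$ of $\mathrm{PG}(4,q)$ is $(PQ^q)$-special if $\mathcal N^\star$ contains one point of the line $PQ^q$ and one point of the line $P^qQ$. *)

(* K : finite field with #|K| = q^2 (i.e. GF(q^2)); GF(q) is the subfield
   {x | x^q = x}; conjugation is x |-> x^q.  All projective spaces are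
   modelled by nonzero row vectors over K, points of PG(n,q) being those
   having a representative with all coordinates in GF(q). *)
From HB Require Import structures.
From mathcomp Require Import all_boot all_order all_algebra all_field.
Set Implicit Arguments. Unset Strict Implicit. Unset Printing Implicit Defensive.
Import GRing.Theory.
Local Open Scope ring_scope.

Definition co (K : finFieldType) (n : nat) (w : 'rV[K]_n.+1) (k : nat) : K :=
  w ord0 (inord k).

Definition row3 (K : finFieldType) (a b c : K) : 'rV[K]_3 :=
  \row_(i < 3) nth 0 [:: a; b; c] i.
Definition row5 (K : finFieldType) (a b c d e : K) : 'rV[K]_5 :=
  \row_(i < 5) nth 0 [:: a; b; c; d; e] i.

Definition cnj (K : finFieldType) (q : nat) (x : K) : K := x ^+ q.
Definition inF (K : finFieldType) (q : nat) (x : K) : bool := x ^+ q == x.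
Definition Fvec (K : finFieldType) (q : nat) (n : nat) (w : 'rV[K]_n) : Prop :=
  forall i, inF q (w ord0 i).
Definition vconj (K : finFieldType) (q : nat) (n : nat) (v : 'rV[K]_n) : 'rV[K]_n :=
  map_mx (cnj q) v.

Definition peq (K : finFieldType) (n : nat) (u v : 'rV[K]_n) : Prop :=
  exists c : K, c != 0 /\ u = c *: v.

Definition Fpt (K : finFieldType) (q : nat) (n : nat) (p : 'rV[K]_n) : Prop :=
  exists w, Fvec q w /\ w != 0 /\ peq p w.

(* ternary quadratic form a x^2 + b y^2 + c z^2 + f yz + g zx + h xy,
   coefficients (a,b,c,f,g,h) = (c0,...,c5) *)
Definition qf (K : finFieldType) (c : 'rV[K]_6) (x : 'rV[K]_3) : K :=
  co c 0 * co x 0 ^+ 2 + co c 1 * co x 1 ^+ 2 + co c 2 * co x 2 ^+ 2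
  + co c 3 * co x 1 * co x 2 + co c 4 * co x 2 * co x 0 + co c 5 * co x 0 * co x 1.

(* characteristic-free discriminant 4abc + fgh - af^2 - bg^2 - ch^2;
   the conic is non-degenerate iff it is nonzero *)
Definition qdisc (K : finFieldType) (c : 'rV[K]_6) : K :=
  4%:R * co c 0 * co c 1 * co c 2 + co c 3 * co c 4 * co c 5
  - co c 0 * co c 3 ^+ 2 - co c 1 * co c 4 ^+ 2 - co c 2 * co c 5 ^+ 2.

Definition Fconic (K : finFieldType) (q : nat) (c : 'rV[K]_6) : Prop :=
  Fvec q c /\ qdisc c != 0.

Definition linf (K : finFieldType) (X : 'rV[K]_3) : Prop := co X 2 = 0.

(* Baer subplane B_M = image of PG(2,q) under the homography x |-> x M *)
Definition inB (K : finFieldType) (q : nat) (M : 'M[K]_3) (X : 'rV[K]_3) : Prop :=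
  exists x, Fvec q x /\ x != 0 /\ peq X (x *m M).

(* B_M is secant to l_infinity: l_infinity meets B_M in (at least, hence
   exactly q+1) two distinct points, i.e. in a Baer subline *)
Definition secant (K : finFieldType) (q : nat) (M : 'M[K]_3) : Prop :=
  exists X Y, inB q M X /\ inB q M Y /\ linf X /\ linf Y /\ ~ peq X Y.

(* the F_q-conic C of B_M with equation c (in the GF(q)-coordinates of B_M) *)
Definition inC (K : finFieldType) (q : nat) (M : 'M[K]_3) (c : 'rV[K]_6)
  (X : 'rV[K]_3) : Prop :=
  exists x, Fvec q x /\ x != 0 /\ qf c x = 0 /\ peq X (x *m M).

(* equation f of the F_{q^2}-conic C^+ (same equation, over GF(q^2)) *)
Definition fplus (K : finFieldType) (M : 'M[K]_3) (c : 'rV[K]_6) (X : 'rV[K]_3) : K :=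
  qf c (X *m invmx M).
Definition inCplus (K : finFieldType) (M : 'M[K]_3) (c : 'rV[K]_6) (X : 'rV[K]_3) : Prop :=
  X != 0 /\ fplus M c X = 0.

(* x = x0 + x1 tau with x0, x1 in GF(q) *)
Definition d1 (K : finFieldType) (q : nat) (tau x : K) : K :=
  (x - cnj q x) / (tau - cnj q tau).
Definition d0 (K : finFieldType) (q : nat) (tau x : K) : K :=
  x - d1 q tau x * tau.

(* [A] = (x0,x1,y0,y1,1) for the affine point A = (x,y,1) *)
Definition bbv (K : finFieldType) (q : nat) (tau : K) (X : 'rV[K]_3) : 'rV[K]_5 :=
  let x := co X 0 / co X 2 in let y := co X 1 / co X 2 in
  row5 (d0 q tau x) (d1 q tau x) (d0 q tau y) (d1 q tau y) 1.

Definition sinf (K : finFieldType) (p : 'rV[K]_5) : Prop := co p 4 = 0.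

Definition inSpread (K : finFieldType) (q : nat) (tau : K) (T : 'rV[K]_3)
  (p : 'rV[K]_5) : Prop :=
  exists w, Fvec q w /\ w != 0 /\ peq p w /\ co w 4 = 0 /\
    exists e : K, co w 0 + co w 1 * tau = e * co T 0 /\
                  co w 2 + co w 3 * tau = e * co T 1.

Definition BBspace (K : finFieldType) (q : nat) (tau : K) (M : 'M[K]_3) : 'M[K]_5 :=
  (\sum_(x : 'rV[K]_3 | [forall i, inF q (x ord0 i)] && (co (x *m M) 2 != 0))
      <<bbv q tau (x *m M)>>)%MS.

Definition inBB (K : finFieldType) (q : nat) (tau : K) (M : 'M[K]_3)
  (p : 'rV[K]_5) : Prop :=
  Fpt q p /\ (p <= BBspace q tau M)%MS.

(* [C] : the [X], X affine in C, together with [T] /\ [B] for T in C on l_inf *)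
Definition inCC (K : finFieldType) (q : nat) (tau : K) (M : 'M[K]_3) (c : 'rV[K]_6)
  (p : 'rV[K]_5) : Prop :=
  (exists X, inC q M c X /\ co X 2 != 0 /\ peq p (bbv q tau X)) \/
  (exists T, inC q M c T /\ linf T /\ inSpread q tau T p /\ inBB q tau M p).

(* [O] for O = C^+ : points (x0,x1,y0,y1,z) of PG(4,q) with
   f(x0 + x1 tau, y0 + y1 tau, z) = f_inf + tau f_0 = 0, i.e. f_inf = f_0 = 0 *)
Definition inOO (K : finFieldType) (q : nat) (tau : K) (M : 'M[K]_3) (c : 'rV[K]_6)
  (p : 'rV[K]_5) : Prop :=
  exists w, Fvec q w /\ w != 0 /\ peq p w /\
    fplus M c (row3 (co w 0 + co w 1 * tau) (co w 2 + co w 3 * tau) (co w 4)) = 0.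

(* non-degenerate conic of PG(4,q): image of a non-degenerate conic of PG(2,q)
   under an injective GF(q)-linear map x |-> x N *)
Definition Fconic4 (K : finFieldType) (q : nat) (N : 'M[K]_(3,5)) (c : 'rV[K]_6) : Prop :=
  (forall i j, inF q (N i j)) /\ row_free N /\ Fconic q c.
Definition inConic4 (K : finFieldType) (q : nat) (N : 'M[K]_(3,5)) (c : 'rV[K]_6)
  (p : 'rV[K]_5) : Prop :=
  exists x, Fvec q x /\ x != 0 /\ qf c x = 0 /\ peq p (x *m N).
Definition inConic4s (K : finFieldType) (N : 'M[K]_(3,5)) (c : 'rV[K]_6)
  (X : 'rV[K]_5) : Prop :=
  exists x, x != 0 /\ qf c x = 0 /\ peq X (x *m N).

(* the point T = [T]^* /\ g of the transversal g = {x0 + x1 tau^q = 0 =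
   y0 + y1 tau^q, z = 0} corresponding to T-bar = (a,b,0) *)
Definition gpt (K : finFieldType) (q : nat) (tau : K) (T : 'rV[K]_3) : 'rV[K]_5 :=
  row5 (- cnj q tau * co T 0) (co T 0) (- cnj q tau * co T 1) (co T 1) 0.

Definition onLine (K : finFieldType) (U V X : 'rV[K]_5) : Prop :=
  X != 0 /\ exists a b : K, X = a *: U + b *: V.

Definition meets1 (K : finFieldType) (N : 'M[K]_(3,5)) (c : 'rV[K]_6)
  (U V : 'rV[K]_5) : Prop :=
  exists X, inConic4s N c X /\ onLine U V X /\
    forall Y, inConic4s N c Y -> onLine U V Y -> peq Y X.

Definition special (K : finFieldType) (q : nat) (N : 'M[K]_(3,5)) (c : 'rV[K]_6)
  (P Q : 'rV[K]_5) : Prop :=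
  meets1 N c P (vconj q Q) /\ meets1 N c (vconj q P) Q.

From HB Require Import structures.
From mathcomp Require Import all_boot all_order all_algebra all_field.
From mathcomp Require abelian pgroup.
From mathcomp Require Import ring.
Set Implicit Arguments. Unset Strict Implicit. Unset Printing Implicit Defensive.
Import GRing.Theory.
Local Open Scope ring_scope.

(* Write t^q for the conjugate of t in K = GF(q^2), and let [glue t] be the
   linear map (x0,x1,y0,y1,z) |-> (x0 + x1 t, y0 + y1 t, z) from K^5 to K^3.
   Every x in K splits uniquely as x = x0 + x1 tau with x0, x1 in GF(q).

   Because B meets
      l_inf in a Baer subline, the column of M giving the z-coordinate is,
      up to a scalar lam, a GF(q)-vector.  Rescaling, M' = M / lam has a
      GF(q)-rational last column, and splitting its first two columns gives a
      3x5 GF(q)-matrix N with  N (glue tau) = M'  and  N (glue tau^q) = M'^q.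
   2. Hence [B] is the plane spanned by the rows of N, the affine part of [C]
      is the image under N of the affine points of the conic c = 0, and a
      point T = t M of B on l_inf gives the single point t N of [T] /\ [B];
      so [C] is the non-degenerate conic of [B] with equation c.
   3. Points of [C^+] on Sigma_inf are GF(q)-vectors w with w (glue tau) on
      C^+ /\ l_inf = {P, Q}, i.e. the points of the spread lines [P], [Q].
   4. If P = t M', then t^q M' is also on C^+ /\ l_inf.  It equals P iff P is
      in B; in the remaining case it is Q, and t N lies on the lines P Q^q and
      P^q Q of PG(4,q^2) (checked through glue tau and glue tau^q), which
      gives the (PQ^q)-special conic. *)

Lemma pchar_nat_q (K : finFieldType) (q : nat) : #|K| = (q ^ 2)%N -> [pchar K].-nat q.
Proof.
move=> hq; have [p pp pc] := finPcharP K.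
rewrite (eq_pnat _ (pcharf_eq pc)).
have : p.-nat #|K|.
  have := abelian.abelem_pgroup (abelian.fin_ring_pchar_abelem pc).
  by rewrite /pgroup.pgroup cardsT.
by apply: pnat_dvd; rewrite hq; exact: dvdn_mulr.
Qed.

Lemma q_gt1 (K : finFieldType) (q : nat) : #|K| = (q ^ 2)%N -> (1 < q)%N.
Proof. by move=> hq; have := finNzRing_gt1 K; rewrite hq; case: q {hq} => [|[|q]]. Qed.

Section Frobenius.
Variables (K : finFieldType) (q : nat).
Hypothesis hq : #|K| = (q ^ 2)%N.

Lemma cnjD (x y : K) : cnj q (x + y) = cnj q x + cnj q y.
Proof. by rewrite /cnj exprDn_pchar // pchar_nat_q. Qed.
Lemma cnjM (x y : K) : cnj q (x * y) = cnj q x * cnj q y.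
Proof. by rewrite /cnj exprMn. Qed.
Lemma cnjK (x : K) : cnj q (cnj q x) = x.
Proof. by rewrite /cnj -exprM -[(q * q)%N]/(q ^ 2)%N -hq expf_card. Qed.
Lemma cnj0 : cnj q (0 : K) = 0.
Proof. by rewrite /cnj expr0n; have := q_gt1 hq; case: q. Qed.
Lemma cnjN (x : K) : cnj q (- x) = - cnj q x.
Proof. by apply/eqP; rewrite -subr_eq0 opprK -cnjD addNr cnj0. Qed.
Lemma cnjB (x y : K) : cnj q (x - y) = cnj q x - cnj q y.
Proof. by rewrite cnjD cnjN. Qed.
Lemma cnjV (x : K) : cnj q x^-1 = (cnj q x)^-1.
Proof. by rewrite /cnj exprVn. Qed.
Lemma cnj_sum n (f : 'I_n -> K) : cnj q (\sum_(i < n) f i) = \sum_(i < n) cnj q (f i).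
Proof. exact: (big_morph _ cnjD cnj0). Qed.

Lemma inF_cnj (x : K) : inF q x -> cnj q x = x.
Proof. by move/eqP. Qed.
Lemma inFD (x y : K) : inF q x -> inF q y -> inF q (x + y).
Proof. by rewrite /inF -!/(cnj q _) cnjD => /eqP-> /eqP->. Qed.
Lemma inFB (x y : K) : inF q x -> inF q y -> inF q (x - y).
Proof. by rewrite /inF -!/(cnj q _) cnjB => /eqP-> /eqP->. Qed.
Lemma inFM (x y : K) : inF q x -> inF q y -> inF q (x * y).
Proof. by rewrite /inF -!/(cnj q _) cnjM => /eqP-> /eqP->. Qed.
Lemma inFV (x : K) : inF q x -> inF q x^-1.
Proof. by rewrite /inF -!/(cnj q _) cnjV => /eqP->. Qed.
Lemma inFn (n : nat) : inF q (n%:R : K).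
Proof.
elim: n => [|n ih]; first by rewrite /inF -/(cnj q 0) cnj0.
by rewrite -addn1 natrD inFD // /inF expr1n.
Qed.
End Frobenius.

(* Splitting x = d0 x + d1 x * tau with d0 x, d1 x in GF(q), for tau a
   primitive element of GF(q^2) (hence tau is not in GF(q)). *)
Section Splitting.
Variables (K : finFieldType) (q : nat) (tau : K).
Hypotheses (hq : #|K| = (q ^ 2)%N) (htau : (q ^ 2 - 1)%N.-primitive_root tau).

Lemma tau_notF : cnj q tau != tau.
Proof.
have q1 := q_gt1 hq.
have t0 : tau != 0.
  apply/negP=> /eqP t0; have := prim_expr_order htau; rewrite t0 expr0n.
  by case: (q ^ 2 - 1)%N (prim_order_gt0 htau) => // n _ /eqP; rewrite eq_sym oner_eq0.
apply/negP => /eqP h.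
have : tau ^+ (q - 1) == 1.
  have e : tau ^+ (q - 1) * tau = tau by rewrite -exprSr subn1 prednK ?h // ltnW.
  by apply/eqP; apply: (mulIf t0); rewrite e mul1r.
rewrite -(prim_order_dvd htau) => /dvdn_leq.
rewrite subn_gt0 q1 => /(_ isT); rewrite leqNgt => /negP; apply.
rewrite ltn_sub2r //; first by rewrite (ltn_trans q1) // -{1}(expn1 q) ltn_exp2l.
by rewrite -{1}(expn1 q) ltn_exp2l.
Qed.

Definition tq := cnj q tau.
Lemma dtau_neq0 : tau - tq != 0.
Proof. by rewrite subr_eq0 eq_sym tau_notF. Qed.

Lemma d1E (x : K) : d1 q tau x * (tau - tq) = x - cnj q x.
Proof. by rewrite /d1 divfK ?dtau_neq0. Qed.
Lemma d1_inF (x : K) : inF q (d1 q tau x).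
Proof.
rewrite /inF -/(cnj q _) /d1 cnjM cnjV !cnjB // !cnjK //.
by rewrite -mulrNN -invrN !opprB.
Qed.
Lemma d0_inF (x : K) : inF q (d0 q tau x).
Proof.
rewrite /inF -/(cnj q _) /d0 cnjB // cnjM (inF_cnj (d1_inF x)) -/tq.
have e := d1E x; set a := d1 q tau x in e *; set cx := cnj q x in e *.
by apply/eqP; rewrite -(subrK cx x) -e; ring.
Qed.
Lemma d01E (x : K) : d0 q tau x + d1 q tau x * tau = x.
Proof. by rewrite /d0 subrK. Qed.
Lemma d01qE (x : K) : d0 q tau x + d1 q tau x * tq = cnj q x.
Proof.
rewrite /d0; have e := d1E x; set a := d1 q tau x in e *; set cx := cnj q x in e *.
by rewrite -(subrK cx x) -e; ring.
Qed.

Lemma Fq_tau_indep (a b : K) : inF q a -> inF q b -> a + b * tau = 0 -> a = 0 /\ b = 0.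
Proof.
move=> ha hb e.
have e2 : a + b * tq = 0.
  by rewrite -(inF_cnj ha) -(inF_cnj hb) -cnjM -cnjD // e cnj0.
have : b * (tau - tq) = 0.
  have -> : b * (tau - tq) = (a + b * tau) - (a + b * tq) by ring.
  by rewrite e e2 subrr.
move/eqP; rewrite mulf_eq0 (negbTE dtau_neq0) orbF => /eqP b0.
by move: e; rewrite b0 mul0r addr0.
Qed.
Lemma d1_uniq (a b : K) : inF q a -> inF q b -> d1 q tau (a + b * tau) = b.
Proof.
move=> ha hb; apply/eqP; rewrite -subr_eq0; apply/eqP.
have h1 : inF q (d0 q tau (a + b * tau) - a) by rewrite inFB // d0_inF.
have h2 : inF q (d1 q tau (a + b * tau) - b) by rewrite inFB // d1_inF.
have h3 : (d0 q tau (a + b * tau) - a) + (d1 q tau (a + b * tau) - b) * tau = 0.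
  by rewrite mulrBl addrACA d01E; ring.
by case: (Fq_tau_indep h1 h2 h3).
Qed.
Lemma d0_uniq (a b : K) : inF q a -> inF q b -> d0 q tau (a + b * tau) = a.
Proof. by move=> ha hb; rewrite /d0 d1_uniq // addrK. Qed.
End Splitting.

Lemma co_row3 (K : finFieldType) (a b c : K) k : (k < 3)%N ->
  co (row3 a b c) k = nth 0 [:: a; b; c] k.
Proof. by move=> hk; rewrite /co mxE inordK. Qed.
Lemma co_row5 (K : finFieldType) (a b c d e : K) k : (k < 5)%N ->
  co (row5 a b c d e) k = nth 0 [:: a; b; c; d; e] k.
Proof. by move=> hk; rewrite /co mxE inordK. Qed.
Lemma ord_inord n (i : 'I_n.+1) : i = inord (val i).
Proof. by apply/val_inj; rewrite /= inordK. Qed.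
Lemma rv_eq (K : finFieldType) n (u v : 'rV[K]_n.+1) :
  (forall k, (k < n.+1)%N -> co u k = co v k) -> u = v.
Proof. by move=> h; apply/rowP => i; rewrite (ord_inord i); exact: h (ltn_ord i). Qed.
Lemma co_mul3 (K : finFieldType) n (x : 'rV[K]_3) (A : 'M[K]_(3, n.+1)) k :
  co (x *m A) k = co x 0 * A (inord 0) (inord k) + co x 1 * A (inord 1) (inord k)
                + co x 2 * A (inord 2) (inord k).
Proof.
rewrite /co mxE !big_ord_recr big_ord0 /= add0r.
by congr (_ + _ + _); congr (x _ _ * A _ _); apply/val_inj => /=; rewrite inordK.
Qed.
Lemma co_mul5 (K : finFieldType) n (x : 'rV[K]_5) (A : 'M[K]_(5, n.+1)) k :
  co (x *m A) k = co x 0 * A (inord 0) (inord k) + co x 1 * A (inord 1) (inord k)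
                + co x 2 * A (inord 2) (inord k) + co x 3 * A (inord 3) (inord k)
                + co x 4 * A (inord 4) (inord k).
Proof.
rewrite /co mxE !big_ord_recr big_ord0 /= add0r.
by congr (_ + _ + _ + _ + _); congr (x _ _ * A _ _); apply/val_inj => /=; rewrite inordK.
Qed.
Lemma coZ (K : finFieldType) n (u : 'rV[K]_n.+1) a k : co (a *: u) k = a * co u k.
Proof. by rewrite /co mxE. Qed.
Lemma coD (K : finFieldType) n (u v : 'rV[K]_n.+1) k : co (u + v) k = co u k + co v k.
Proof. by rewrite /co mxE. Qed.
Lemma co0 (K : finFieldType) n k : co (0 : 'rV[K]_n.+1) k = 0.
Proof. by rewrite /co mxE. Qed.
Lemma nz_co (K : finFieldType) n (u : 'rV[K]_n.+1) :
  u != 0 -> exists j, (j < n.+1)%N /\ co u j != 0.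
Proof.
move=> nz; have [/existsP [j hj]|/existsPn h] := boolP [exists j : 'I_n.+1, u ord0 j != 0].
  by exists (val j); rewrite ltn_ord /co -ord_inord.
by case/eqP: nz; apply/rowP => i; rewrite mxE; have := h i; rewrite negbK => /eqP.
Qed.

Definition glue (K : finFieldType) (t : K) : 'M[K]_(5, 3) :=
  \matrix_(i < 5, j < 3) nth 0 [:: nth 0 [:: 1; 0; 0] j; nth 0 [:: t; 0; 0] j;
      nth 0 [:: 0; 1; 0] j; nth 0 [:: 0; t; 0] j; nth 0 [:: 0; 0; 1] j] i.

Lemma mul_glue (K : finFieldType) (w : 'rV[K]_5) t :
  w *m glue t = row3 (co w 0 + co w 1 * t) (co w 2 + co w 3 * t) (co w 4).
Proof.
apply: rv_eq => k hk; rewrite co_mul5 !mxE !inordK // co_row3 //.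
by case: k hk => [|[|[|]]] //= _; ring.
Qed.

Section ProjectiveEquality.
Variables (K : finFieldType) (n : nat).
Implicit Types u v w : 'rV[K]_n.

Lemma peq_refl u : peq u u.
Proof. by exists 1; rewrite oner_neq0 scale1r. Qed.
Lemma peq_sym u v : peq u v -> peq v u.
Proof.
case=> k [k0 ->]; exists k^-1; split; first by rewrite invr_eq0.
by rewrite scalerA mulVf // scale1r.
Qed.
Lemma peq_trans u v w : peq u v -> peq v w -> peq u w.
Proof.
case=> k [k0 ->] [l [l0 ->]]; exists (k * l); split; first by rewrite mulf_neq0.
by rewrite scalerA.
Qed.
Lemma peq_nz u v : peq u v -> (u == 0) = (v == 0).
Proof. by case=> k [k0 ->]; rewrite scaler_eq0 (negbTE k0). Qed.
Lemma peqZ u k : k != 0 -> peq (k *: u) u.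
Proof. by move=> k0; exists k. Qed.
End ProjectiveEquality.

Section Conjugation.
Variables (K : finFieldType) (q : nat).
Hypothesis hq : #|K| = (q ^ 2)%N.

Lemma co_vconj n (u : 'rV[K]_n.+1) k : co (vconj q u) k = cnj q (co u k).
Proof. by rewrite /co mxE. Qed.
Lemma vconjM m n p (A : 'M[K]_(m, n)) (B : 'M[K]_(n, p)) :
  map_mx (cnj q) (A *m B) = map_mx (cnj q) A *m map_mx (cnj q) B.
Proof.
apply/matrixP => i j; rewrite !mxE cnj_sum //; apply: eq_bigr => k _.
by rewrite !mxE cnjM.
Qed.
Lemma vconjZ m n (A : 'M[K]_(m, n)) a :
  map_mx (cnj q) (a *: A) = cnj q a *: map_mx (cnj q) A.
Proof. by apply/matrixP => i j; rewrite !mxE cnjM. Qed.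
Lemma vconjK m n (A : 'M[K]_(m, n)) : map_mx (cnj q) (map_mx (cnj q) A) = A.
Proof. by apply/matrixP => i j; rewrite !mxE cnjK. Qed.
Lemma vconj_eq0 m n (A : 'M[K]_(m, n)) : (map_mx (cnj q) A == 0) = (A == 0).
Proof.
have c0 : map_mx (cnj q) (0 : 'M[K]_(m, n)) = 0.
  by apply/matrixP => i j; rewrite !mxE cnj0.
by apply/eqP/eqP => [h|->] //; rewrite -(vconjK A) h c0.
Qed.
Lemma FvecP n (u : 'rV[K]_n) : Fvec q u <-> vconj q u = u.
Proof.
split=> [h|h i]; first by apply/rowP => i; rewrite mxE; apply/eqP/h.
by apply/eqP; rewrite -{2}h mxE.
Qed.
Lemma Fmx_conj m n (A : 'M[K]_(m, n)) :
  (forall i j, inF q (A i j)) -> map_mx (cnj q) A = A.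
Proof. by move=> h; apply/matrixP => i j; rewrite mxE; apply/eqP/h. Qed.

Lemma qfZ (c : 'rV[K]_6) (x : 'rV[K]_3) a : qf c (a *: x) = a ^+ 2 * qf c x.
Proof. by rewrite /qf !coZ; ring. Qed.
Lemma qf_conj (c : 'rV[K]_6) (x : 'rV[K]_3) : Fvec q c ->
  qf c (vconj q x) = cnj q (qf c x).
Proof.
move=> hc; have hcc k : cnj q (co c k) = co c k by apply/eqP/hc.
have cX (a : K) : cnj q (a ^+ 2) = cnj q a ^+ 2 by rewrite /cnj exprAC.
by rewrite /qf !co_vconj !cnjD // ?cX !cnjM ?cX !hcc; ring.
Qed.

Lemma conj_fixed_Fvec (t : 'rV[K]_3) k : t != 0 -> vconj q t = k *: t ->
  exists w, Fvec q w /\ w != 0 /\ exists mu, mu != 0 /\ t = mu *: w.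
Proof.
move=> t0 et; have [j [hj tj]] := nz_co t0.
have k0 : k != 0.
  by apply: contraNneq t0 => k0; rewrite -(vconj_eq0 t) -/(vconj q t) et k0 scale0r.
have ej : cnj q (co t j) = k * co t j by rewrite -co_vconj et coZ.
exists ((co t j)^-1 *: t); split.
  apply/FvecP; rewrite /vconj vconjZ -/(vconj q t) et scalerA cnjV ej.
  by rewrite invfM mulrAC mulVf // mul1r.
split; first by rewrite scaler_eq0 negb_or invr_eq0 tj.
by exists (co t j); split => //; rewrite scalerA mulfV // scale1r.
Qed.
End Conjugation.

Section CrossProduct.
Variable K : finFieldType.
Implicit Types x y v : 'rV[K]_3.

Definition dot3 x v : K := co x 0 * co v 0 + co x 1 * co v 1 + co x 2 * co v 2.
Definition cross3 x y : 'rV[K]_3 :=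
  row3 (co x 1 * co y 2 - co x 2 * co y 1) (co x 2 * co y 0 - co x 0 * co y 2)
       (co x 0 * co y 1 - co x 1 * co y 0).

Lemma proportional3 x y : y != 0 ->
  co x 1 * co y 2 = co x 2 * co y 1 -> co x 2 * co y 0 = co x 0 * co y 2 ->
  co x 0 * co y 1 = co x 1 * co y 0 -> exists k, x = k *: y.
Proof.
move=> /nz_co [j [hj nzj]] e1 e2 e3; exists (co x j / co y j).
apply: rv_eq => k hk; rewrite coZ.
case: j hj nzj => [|[|[|]]] // _ nzj; apply/(mulIf nzj); rewrite mulrAC divfK //;
  case: k hk => [|[|[|]]] // _; rewrite ?e1 ?e2 ?e3; first [ring | by rewrite e1; ring
  | by rewrite e2; ring | by rewrite e3; ring | idtac].
all: try (rewrite -e1; ring); try (rewrite -e2; ring); try (rewrite -e3; ring).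
Qed.

Lemma cross3_eq0 x y : y != 0 -> cross3 x y = 0 -> exists k, x = k *: y.
Proof.
move=> y0 e; have minor k a b : (k < 3)%N -> co (cross3 x y) k = a - b -> a = b.
  by move=> hk h; apply/eqP; rewrite -subr_eq0 -h e co0.
apply: proportional3 => //.
- by apply: (minor 0%N); rewrite ?co_row3.
- by apply: (minor 1%N); rewrite ?co_row3.
- by apply: (minor 2%N); rewrite ?co_row3.
Qed.

Lemma cross3_orth x y v : dot3 x v = 0 -> dot3 y v = 0 -> cross3 x y != 0 ->
  exists k, v = k *: cross3 x y.
Proof.
rewrite /dot3 => dx dy z0; apply: proportional3 => //; rewrite !co_row3 //=;
  apply/eqP; rewrite -subr_eq0; apply/eqP.
- transitivity (co x 0 * dot3 y v - co y 0 * dot3 x v); last by rewrite /dot3 dx dy; ring.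
  by rewrite /dot3; ring.
- transitivity (co x 1 * dot3 y v - co y 1 * dot3 x v); last by rewrite /dot3 dx dy; ring.
  by rewrite /dot3; ring.
- transitivity (co x 2 * dot3 y v - co y 2 * dot3 x v); last by rewrite /dot3 dx dy; ring.
  by rewrite /dot3; ring.
Qed.

Lemma cross3_Fvec q : #|K| = (q ^ 2)%N -> forall x y, Fvec q x -> Fvec q y -> Fvec q (cross3 x y).
Proof.
move=> hq x y Fx Fy i; rewrite (ord_inord i) -/(co _ i) co_row3 ?ltn_ord //.
by case: i => [[|[|[|]]] hi] //=; rewrite inFB // inFM //; first [exact: Fx | exact: Fy].
Qed.
End CrossProduct.

Lemma bbvZ (K : finFieldType) (q : nat) (tau : K) (X : 'rV[K]_3) k :
  k != 0 -> bbv q tau (k *: X) = bbv q tau X.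
Proof.
move=> k0; have divZ a b : (k * a) / (k * b) = a / b.
  by rewrite invfM mulrACA mulfV // mul1r.
by rewrite /bbv !coZ !divZ.
Qed.

Section Transversals.
Variables (K : finFieldType) (q : nat) (tau : K).
Hypotheses (hq : #|K| = (q ^ 2)%N) (htau : (q ^ 2 - 1)%N.-primitive_root tau).

Lemma glue_gpt T : linf T -> gpt q tau T *m glue tau = (tau - tq q tau) *: T.
Proof.
move=> lT; rewrite mul_glue; apply: rv_eq => k hk.
rewrite coZ co_row3 // /gpt !co_row5 //.
by case: k hk => [|[|[|]]] //= _; rewrite ?lT /tq; ring.
Qed.
Lemma glue_conj_gpt T : gpt q tau T *m glue (tq q tau) = 0.
Proof.
rewrite mul_glue; apply: rv_eq => k hk; rewrite co0 co_row3 // /gpt !co_row5 //.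
by case: k hk => [|[|[|]]] //= _; rewrite /tq; ring.
Qed.
Lemma glue_vgpt T : vconj q (gpt q tau T) *m glue tau = 0.
Proof.
rewrite mul_glue; apply: rv_eq => k hk; rewrite co0 co_row3 // !co_vconj /gpt !co_row5 //.
by case: k hk => [|[|[|]]] //= _; rewrite ?(cnj0 hq) // (cnjM _ (- _)) (cnjN hq) (cnjK hq); ring.
Qed.
Lemma glue_conj_vgpt T : linf T ->
  vconj q (gpt q tau T) *m glue (tq q tau) = (tq q tau - tau) *: vconj q T.
Proof.
move=> lT; rewrite mul_glue; apply: rv_eq => k hk.
rewrite coZ co_row3 // !co_vconj /gpt !co_row5 //.
case: k hk => [|[|[|]]] //= _; rewrite ?(cnj0 hq) ?lT ?(cnj0 hq) ?mulr0 //.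
all: by rewrite (cnjM _ (- _)) (cnjN hq) /tq (cnjK hq); ring.
Qed.
Lemma gpt_z T : co (gpt q tau T) 4 = 0.
Proof. by rewrite /gpt co_row5. Qed.
Lemma vgpt_z T : co (vconj q (gpt q tau T)) 4 = 0.
Proof. by rewrite co_vconj gpt_z (cnj0 hq). Qed.

(* A vector of K^5 is determined by its z-coordinate and its images under
   glue tau and glue tau^q (tau and tau^q are distinct). *)
Lemma glue_inj (u v : 'rV[K]_5) : co u 4 = co v 4 ->
  u *m glue tau = v *m glue tau -> u *m glue (tq q tau) = v *m glue (tq q tau) -> u = v.
Proof.
move=> e4 e1 e2.
have pair k : (k < 2)%N -> co u k.*2 = co v k.*2 /\ co u k.*2.+1 = co v k.*2.+1.
  move=> hk.
  have [] : co u k.*2 + co u k.*2.+1 * tau = co v k.*2 + co v k.*2.+1 * tau /\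
            co u k.*2 + co u k.*2.+1 * tq q tau = co v k.*2 + co v k.*2.+1 * tq q tau.
    have := congr1 (fun w => co w k) e1; have := congr1 (fun w => co w k) e2.
    by case: k hk => [|[|]] // _; rewrite !mul_glue !co_row3.
  move: (co u k.*2) (co u k.*2.+1) (co v k.*2) (co v k.*2.+1) => a b a' b' h1 h2.
  have : (b - b') * (tau - tq q tau) = 0.
    transitivity ((a + b * tau) - (a + b * tq q tau)
                  - ((a' + b' * tau) - (a' + b' * tq q tau))); first by ring.
    by rewrite h1 h2 subrr.
  move/eqP; rewrite mulf_eq0 (negbTE (dtau_neq0 hq htau)) orbF subr_eq0 => /eqP e.
  by split => //; move: h1; rewrite e => /addIr.
apply: rv_eq => k hk; case: k hk => [|[|[|[|[|]]]]] // _.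
- exact: (pair 0%N isT).1.
- exact: (pair 0%N isT).2.
- exact: (pair 1%N isT).1.
- exact: (pair 1%N isT).2.
Qed.
Lemma glue_nz (w : 'rV[K]_5) : Fvec q w -> w != 0 -> co w 4 = 0 -> w *m glue tau != 0.
Proof.
move=> Fw w0 w4; apply: contraNneq w0; rewrite mul_glue => X0.
have cw j : inF q (co w j) by exact: Fw.
have := congr1 (fun v => co v 0) X0; have := congr1 (fun v => co v 1) X0.
rewrite /= !co_row3 // !co0 => h1 h0.
have [e0 e1] := Fq_tau_indep hq htau (cw 0%N) (cw 1%N) h0.
have [e2 e3] := Fq_tau_indep hq htau (cw 2%N) (cw 3%N) h1.
by apply/eqP; apply: rv_eq => j hj; rewrite co0; case: j hj => [|[|[|[|[|]]]]].
Qed.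
End Transversals.

Lemma onLine_swap (K : finFieldType) (U V X : 'rV[K]_5) : onLine U V X -> onLine V U X.
Proof. by case=> X0 [a [b eX]]; split => //; exists b, a; rewrite addrC. Qed.
Lemma meets1_swap (K : finFieldType) (N : 'M[K]_(3, 5)) c (U V : 'rV[K]_5) :
  meets1 N c U V -> meets1 N c V U.
Proof.
case=> X [cX [lX h]]; exists X; split => //; split; first exact: onLine_swap.
by move=> Y cY lY; apply: h => //; exact: onLine_swap.
Qed.

Section BruckBose.
Variables (K : finFieldType) (q : nat) (tau : K) (M : 'M[K]_3) (c : 'rV[K]_6).
Hypotheses (hq : #|K| = (q ^ 2)%N) (htau : (q ^ 2 - 1)%N.-primitive_root tau)
  (hM : M \in unitmx) (hc : Fconic q c).

(* The column of M computing the z-coordinate: the point x M of B lies on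
   l_inf iff x is orthogonal to zcol. *)
Definition zcol : 'rV[K]_3 :=
  row3 (M (inord 0) (inord 2)) (M (inord 1) (inord 2)) (M (inord 2) (inord 2)).

Lemma co_zcol x : co (x *m M) 2 = dot3 x zcol.
Proof. by rewrite co_mul3 /dot3 !co_row3. Qed.

Lemma zcol_nz : zcol != 0.
Proof.
apply/negP => /eqP z0.
have e : (row3 0 0 1 *m invmx M) *m M = row3 0 0 1 by rewrite mulmxKV.
have := congr1 (fun v => co v 2) e; rewrite co_zcol /dot3 z0 !co0 co_row3 //=.
by move/eqP; rewrite !mulr0 !addr0 eq_sym oner_eq0.
Qed.

(* B secant to l_inf: the two GF(q)-points of B on l_inf span the kernel of
   zcol, so zcol is a multiple of their (GF(q)-rational) cross product. *)
Lemma secant_zcol_Fq : secant q M ->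
  exists (lam : K) (m : 'rV[K]_3), lam != 0 /\ Fvec q m /\ zcol = lam *: m.
Proof.
case=> X [Y [[x [Fx [x0 eX]]] [[y [Fy [y0 eY]]] [lX [lY nXY]]]]].
have orth z Z : peq Z (z *m M) -> linf Z -> dot3 z zcol = 0.
  case=> k [k0 ->]; rewrite /linf coZ co_zcol => /eqP.
  by rewrite mulf_eq0 (negbTE k0) => /eqP.
have z0 : cross3 x y != 0.
  apply/negP => /eqP /(cross3_eq0 y0) [k ek]; apply: nXY.
  have k0 : k != 0 by apply: contraNneq x0 => k0; rewrite ek k0 scale0r.
  apply: peq_trans eX _; rewrite ek -scalemxAl.
  by apply: peq_trans (peqZ _ k0) (peq_sym eY).
have [lam el] := cross3_orth (orth _ _ eX lX) (orth _ _ eY lY) z0.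
exists lam, (cross3 x y); split; last by split => //; exact: cross3_Fvec.
by apply: contraNneq zcol_nz => l0; rewrite el l0 scale0r.
Qed.

Section Normalized.
Variables (lam : K) (m : 'rV[K]_3).
Hypotheses (hlam : lam != 0) (hm : Fvec q m) (hzcol : zcol = lam *: m).

(* M normalized so that its z-column is GF(q)-rational. *)
Definition Mn := lam^-1 *: M.

Lemma Mn_unit : Mn \in unitmx.
Proof. by rewrite unitmxZ // unitfE invr_eq0. Qed.
Lemma Mn_zcol k : (k < 3)%N -> Mn (inord k) (inord 2) = co m k.
Proof.
move=> hk; rewrite mxE.
have : co zcol k = co (lam *: m) k by rewrite hzcol.
rewrite coZ /zcol co_row3 // => e.
have -> : M (inord k) (inord 2) = lam * co m k by rewrite -e; case: k hk {e} => [|[|[|]]].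
by rewrite mulrA mulVf // mul1r.
Qed.
Lemma M_Mn (u : 'rV[K]_3) : u *m M = lam *: (u *m Mn).
Proof. by rewrite /Mn -scalemxAr scalerA mulfV // scale1r. Qed.
Lemma Mn_inj (u v : 'rV[K]_3) : u *m Mn = v *m Mn -> u = v.
Proof. by move=> e; rewrite -(mulmxK Mn_unit u) e mulmxK // Mn_unit. Qed.
Lemma Mn_eq0 (u : 'rV[K]_3) : (u *m Mn == 0) = (u == 0).
Proof.
by apply/eqP/eqP => [h|->]; [apply: Mn_inj; rewrite h mul0mx | rewrite mul0mx].
Qed.
Lemma zcoord_Mn (x : 'rV[K]_3) : (co (x *m M) 2 != 0) = (co (x *m Mn) 2 != 0).
Proof. by rewrite M_Mn coZ mulf_eq0 (negbTE hlam). Qed.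
Lemma zcoord_conj (u : 'rV[K]_3) : co (vconj q u *m Mn) 2 = cnj q (co (u *m Mn) 2).
Proof.
rewrite !co_mul3 !co_vconj !cnjD // !cnjM.
have e k : (k < 3)%N -> cnj q (Mn (inord k) (inord 2)) = Mn (inord k) (inord 2).
  by move=> hk; rewrite Mn_zcol // inF_cnj //; exact: hm.
by rewrite !e.
Qed.
Lemma m_nz : m != 0.
Proof. by apply: contraNneq zcol_nz => m0; rewrite hzcol m0 scaler0. Qed.

Lemma fplusZ (X : 'rV[K]_3) k : fplus M c (k *: X) = k ^+ 2 * fplus M c X.
Proof. by rewrite /fplus -scalemxAl qfZ. Qed.
Lemma fplus_M (u : 'rV[K]_3) : fplus M c (u *m M) = qf c u.
Proof. by rewrite /fplus mulmxK. Qed.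
Lemma fplus_Mn (u : 'rV[K]_3) : fplus M c (u *m Mn) = lam^-1 ^+ 2 * qf c u.
Proof. by rewrite /fplus /Mn -scalemxAr -scalemxAl mulmxK // qfZ. Qed.
Lemma fplus_Mn_eq0 (u : 'rV[K]_3) : (fplus M c (u *m Mn) == 0) = (qf c u == 0).
Proof. by rewrite fplus_Mn mulf_eq0 expf_eq0 invr_eq0 (negbTE hlam). Qed.

(* The GF(q)-matrix N whose rows span [B]: row i splits the first two entries
   of row i of Mn over the basis (1, tau). *)
Definition bbmat : 'M[K]_(3, 5) := \matrix_(i < 3, j < 5)
  nth 0 [:: d0 q tau (Mn i (inord 0)); d1 q tau (Mn i (inord 0));
            d0 q tau (Mn i (inord 1)); d1 q tau (Mn i (inord 1)); Mn i (inord 2)] j.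

Lemma bbmat_inF i j : inF q (bbmat i j).
Proof.
rewrite mxE; case: j => [[|[|[|[|[|]]]]] hj] //=; rewrite ?d0_inF ?d1_inF //.
by have := Mn_zcol (ltn_ord i); rewrite -(ord_inord i) => ->; exact: hm.
Qed.
Lemma bbmat_conj : map_mx (cnj q) bbmat = bbmat.
Proof. exact: Fmx_conj bbmat_inF. Qed.

Lemma bbmat_glue : bbmat *m glue tau = Mn.
Proof.
apply/matrixP => i j; rewrite mxE !big_ord_recr big_ord0 /= add0r !mxE /=.
case: j => [[|[|[|]]] hj] //=.
- by rewrite !mulr0 !addr0 mulr1 d01E (ord_inord (Ordinal hj)).
- by rewrite !mulr0 !add0r mulr1 addr0 d01E (ord_inord (Ordinal hj)).
- by rewrite !mulr0 !add0r mulr1 (ord_inord (Ordinal hj)).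
Qed.
Lemma bbmat_glue_conj : bbmat *m glue (tq q tau) = map_mx (cnj q) Mn.
Proof.
apply/matrixP => i j; rewrite mxE !big_ord_recr big_ord0 /= add0r !mxE /=.
case: j => [[|[|[|]]] hj] //=.
- by rewrite !mulr0 !addr0 mulr1 (d01qE hq htau) (ord_inord (Ordinal hj)).
- by rewrite !mulr0 !add0r mulr1 addr0 (d01qE hq htau) (ord_inord (Ordinal hj)).
- rewrite !mulr0 !add0r mulr1 (ord_inord (Ordinal hj)) /=.
  have := Mn_zcol (ltn_ord i); rewrite -(ord_inord i) mxE => ->.
  by rewrite inF_cnj //; exact: hm.
Qed.
Lemma bbmat_free : row_free bbmat.
Proof.
apply/row_freeP; exists (glue tau *m invmx Mn).
by rewrite mulmxA bbmat_glue mulmxV // Mn_unit.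
Qed.

Lemma mul_bbmat_glue (u : 'rV[K]_3) : (u *m bbmat) *m glue tau = u *m Mn.
Proof. by rewrite -mulmxA bbmat_glue. Qed.
Lemma mul_bbmat_glue_conj (u : 'rV[K]_3) :
  (u *m bbmat) *m glue (tq q tau) = u *m map_mx (cnj q) Mn.
Proof. by rewrite -mulmxA bbmat_glue_conj. Qed.
Lemma co_bbmat4 (u : 'rV[K]_3) : co (u *m bbmat) 4 = co (u *m Mn) 2.
Proof. by rewrite -mul_bbmat_glue mul_glue co_row3. Qed.
Lemma co_bbmat01 (u : 'rV[K]_3) :
  co (u *m bbmat) 0 + co (u *m bbmat) 1 * tau = co (u *m Mn) 0.
Proof. by rewrite -mul_bbmat_glue mul_glue co_row3. Qed.
Lemma co_bbmat23 (u : 'rV[K]_3) :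
  co (u *m bbmat) 2 + co (u *m bbmat) 3 * tau = co (u *m Mn) 1.
Proof. by rewrite -mul_bbmat_glue mul_glue co_row3. Qed.

Lemma bbmat_inj (u v : 'rV[K]_3) : u *m bbmat = v *m bbmat -> u = v.
Proof. exact: (row_free_inj bbmat_free). Qed.
Lemma bbmat_eq0 (u : 'rV[K]_3) : (u *m bbmat == 0) = (u == 0).
Proof.
by apply/eqP/eqP => [h|->]; [apply: bbmat_inj; rewrite h mul0mx | rewrite mul0mx].
Qed.
Lemma bbmat_Fvec (u : 'rV[K]_3) : Fvec q (u *m bbmat) <-> Fvec q u.
Proof.
rewrite !FvecP /vconj vconjM // bbmat_conj; split => [h|-> //].
by apply: bbmat_inj.
Qed.

Lemma bbv_bbmat (x : 'rV[K]_3) : Fvec q x -> co (x *m Mn) 2 != 0 ->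
  bbv q tau (x *m M) = (co (x *m Mn) 2)^-1 *: (x *m bbmat).
Proof.
move=> Fx s0.
rewrite M_Mn bbvZ //.
have cw k : inF q (co (x *m bbmat) k) by apply/(bbmat_Fvec x).2.
have e4 := co_bbmat4 x; have e01 := co_bbmat01 x; have e23 := co_bbmat23 x.
set w := x *m bbmat in cw e4 e01 e23 *; set s := co (x *m Mn) 2 in s0 e4 *.
have hs : inF q s^-1 by rewrite inFV // -e4.
have h01 : co (x *m Mn) 0 / s = co w 0 / s + co w 1 / s * tau by rewrite -e01 mulrDl mulrAC.
have h23 : co (x *m Mn) 1 / s = co w 2 / s + co w 3 / s * tau by rewrite -e23 mulrDl mulrAC.
rewrite /bbv h01 h23 !(d0_uniq hq htau) ?(d1_uniq hq htau) ?inFM //.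
apply: rv_eq => k hk; rewrite coZ co_row5 //.
by case: k hk => [|[|[|[|[|]]]]] //= _; rewrite ?e4 ?mulVf // mulrC.
Qed.

Lemma BBspace_le_bbmat : (BBspace q tau M <= bbmat)%MS.
Proof.
apply/sumsmx_subP => x /andP [/forallP Fx hs]; rewrite genmxE.
rewrite zcoord_Mn in hs; rewrite bbv_bbmat //.
by apply: scalemx_sub; exact: submxMl.
Qed.

Lemma Fvec_le_BBspace (x : 'rV[K]_3) : Fvec q x -> (x *m bbmat <= BBspace q tau M)%MS.
Proof.
have affine y : Fvec q y -> co (y *m Mn) 2 != 0 -> (y *m bbmat <= BBspace q tau M)%MS.
  move=> Fy sy.
  have -> : y *m bbmat = co (y *m Mn) 2 *: bbv q tau (y *m M).
    by rewrite bbv_bbmat // scalerA mulfV // scale1r.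
  apply/scalemx_sub/(sumsmx_sup y); last by rewrite genmxE.
  by rewrite zcoord_Mn sy andbT; apply/forallP.
move=> Fx; have [/eqP s0|] := boolP (co (x *m Mn) 2 == 0); last exact: affine.
(* a point at infinity is the difference of two affine GF(q)-points *)
have [j [hj mj]] := nz_co m_nz.
set e := delta_mx 0 (inord j) : 'rV[K]_3.
have Fe : Fvec q e by move=> i; rewrite mxE inFn.
have se : co (e *m Mn) 2 = co m j by rewrite -rowE /co mxE Mn_zcol.
have -> : x *m bbmat = (x + e) *m bbmat + (-1) *: (e *m bbmat).
  by rewrite mulmxDl scaleN1r addrK.
apply: addmx_sub; last by apply/scalemx_sub/affine; rewrite ?se.
apply: affine; first by move=> i; rewrite mxE inFD.
by rewrite mulmxDl coD s0 add0r se.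
Qed.

Lemma inBB_iff p : inBB q tau M p <-> exists w, Fvec q w /\ w != 0 /\ peq p (w *m bbmat).
Proof.
split.
  case=> [[w' [Fw' [w'0 [k [k0 pk]]]]] hle].
  have /submxP [D eD] := submx_trans hle BBspace_le_bbmat.
  have ew : w' = (k^-1 *: D) *m bbmat.
    by rewrite -scalemxAl -eD pk scalerA mulVf // scale1r.
  exists (k^-1 *: D); split; first by apply/bbmat_Fvec; rewrite -ew.
  split; last by rewrite -ew pk; exact: peqZ.
  by apply: contraNneq w'0 => h; rewrite ew h mul0mx.
case=> w [Fw [w0 [k [k0 ->]]]]; split; last exact/scalemx_sub/Fvec_le_BBspace.
exists (w *m bbmat); split; first exact/bbmat_Fvec.
by split; [rewrite bbmat_eq0 | exact: peqZ].
Qed.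

Lemma glue_spread (w : 'rV[K]_5) (T : 'rV[K]_3) e : linf T -> co w 4 = 0 ->
  co w 0 + co w 1 * tau = e * co T 0 -> co w 2 + co w 3 * tau = e * co T 1 ->
  w *m glue tau = e *: T.
Proof.
move=> lT w4 e1 e2; rewrite mul_glue; apply: rv_eq => k hk; rewrite co_row3 // coZ.
by case: k hk => [|[|[|]]] //= _; rewrite w4 lT mulr0.
Qed.

Lemma spread_glue (w p : 'rV[K]_5) (T : 'rV[K]_3) e : Fvec q w -> w != 0 ->
  peq p w -> co w 4 = 0 -> w *m glue tau = e *: T -> inSpread q tau T p.
Proof.
move=> Fw w0 pw w4 ew; exists w; do 4!split => //; exists e.
have := congr1 (fun v => co v 0) ew; have := congr1 (fun v => co v 1) ew.
by rewrite /= mul_glue !co_row3 //= !coZ => -> ->.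
Qed.

Lemma inSpread_peq T T' p : peq T T' -> inSpread q tau T p -> inSpread q tau T' p.
Proof.
case=> k [k0 ->] [w [Fw [w0 [pw [w4 [e [e1 e2]]]]]]].
by exists w; do 4!split => //; exists (e * k); rewrite e1 e2 !coZ !mulrA.
Qed.

Lemma spread_BB_iff T p : linf T -> (inSpread q tau T p /\ inBB q tau M p) <->
  exists w, Fvec q w /\ w != 0 /\ peq p (w *m bbmat) /\ exists e, w *m Mn = e *: T.
Proof.
move=> lT; split.
  case=> [[w1 [Fw1 [w10 [pw1 [w14 [e [e1 e2]]]]]]] /inBB_iff [w [Fw [w0 pw]]]].
  exists w; do 3!split => //.
  have [k [k0 ek]] := peq_trans (peq_sym pw1) pw.
  exists (k^-1 * e); rewrite -mul_bbmat_glue.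
  have -> : w *m bbmat = k^-1 *: w1 by rewrite ek scalerA mulVf // scale1r.
  by rewrite -scalemxAl (glue_spread lT w14 e1 e2) scalerA.
case=> w [Fw [w0 [pw [e ew]]]]; split; last by apply/inBB_iff; exists w.
apply: (spread_glue (w := w *m bbmat) (e := e)) => //; first exact/bbmat_Fvec.
- by rewrite bbmat_eq0.
- by rewrite co_bbmat4 ew coZ lT mulr0.
- by rewrite mul_bbmat_glue.
Qed.

Lemma point_BB_iff T t p : linf T -> Fvec q t -> t != 0 -> peq T (t *m M) ->
  (inSpread q tau T p /\ inBB q tau M p) <-> (p != 0 /\ peq p (t *m bbmat)).
Proof.
move=> lT Ft t0 [k [k0 eT]]; rewrite (spread_BB_iff p lT); split.
  case=> w [Fw [w0 [pw [e ew]]]].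
  have ewt : w = (e * k * lam) *: t.
    by apply: Mn_inj; rewrite ew eT M_Mn -scalemxAl !scalerA.
  have mu0 : e * k * lam != 0 by apply: contraNneq w0 => h; rewrite ewt h scale0r.
  split; first by rewrite (peq_nz pw) bbmat_eq0.
  by apply: peq_trans pw _; rewrite ewt -scalemxAl; exact: peqZ.
case=> p0 pt; exists t; do 3!split => //.
exists (k * lam)^-1; rewrite eT M_Mn !scalerA -mulrA mulVf ?scale1r //.
by rewrite mulf_neq0.
Qed.

Lemma inCC_iff p : inCC q tau M c p <-> inConic4 q bbmat c p.
Proof.
split.
  case=> [[X [[x [Fx [x0 [qx [k [k0 eX]]]]]] [X2 pb]]] |
          [T [[t [Ft [t0 [qt pT]]]] [lT sT]]]].
    have s0 : co (x *m Mn) 2 != 0.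
      by rewrite -zcoord_Mn; apply: contraNneq X2 => h; rewrite eX coZ h mulr0.
    exists x; do 3!split => //; apply: peq_trans pb _.
    by rewrite eX bbvZ // bbv_bbmat //; apply: peqZ; rewrite invr_eq0.
  by have [_ pt] := (point_BB_iff p lT Ft t0 pT).1 sT; exists t.
case=> x [Fx [x0 [qx px]]].
have Cx : inC q M c (x *m M) by exists x; do 3!split => //; exact: peq_refl.
have [/eqP s0|s0] := boolP (co (x *m Mn) 2 == 0).
  have lT : linf (x *m M) by rewrite /linf M_Mn coZ s0 mulr0.
  right; exists (x *m M); do 2!split => //.
  by apply/(point_BB_iff p lT Fx x0 (peq_refl _)); rewrite (peq_nz px) bbmat_eq0.
left; exists (x *m M); split => //; split; first by rewrite zcoord_Mn.
rewrite bbv_bbmat //; apply: peq_trans px (peq_sym _); apply: peqZ.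
by rewrite invr_eq0.
Qed.


(* The Baer involution of PG(2,q^2) fixing B pointwise. *)
Definition baer (X : 'rV[K]_3) : 'rV[K]_3 := vconj q (X *m invmx Mn) *m Mn.

Lemma baer_pre (X : 'rV[K]_3) : (X *m invmx Mn) *m Mn = X.
Proof. by rewrite mulmxKV // Mn_unit. Qed.

(* C^+ and l_inf are defined over GF(q) in the coordinates of B, so the Baer
   involution maps C^+ /\ l_inf to itself. *)
Lemma baer_linf_Cplus X : X != 0 -> linf X -> inCplus M c X ->
  baer X != 0 /\ linf (baer X) /\ inCplus M c (baer X).
Proof.
move=> X0 lX [_ fX].
have qt : qf c (X *m invmx Mn) = 0 by apply/eqP; rewrite -fplus_Mn_eq0 baer_pre fX.
have nz : baer X != 0 by rewrite /baer Mn_eq0 /vconj vconj_eq0 // -Mn_eq0 baer_pre.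
split => //; split; first by rewrite /linf /baer zcoord_conj baer_pre lX (cnj0 hq).
split => //; apply/eqP; rewrite /baer fplus_Mn_eq0 (qf_conj hq) ?qt ?(cnj0 hq) //.
by case: hc.
Qed.

Lemma baer_fixed_inB X : X != 0 -> peq (baer X) X -> inB q M X.
Proof.
move=> X0 [k [k0 ek]]; set t := X *m invmx Mn.
have t0 : t != 0 by rewrite -Mn_eq0 baer_pre.
have : vconj q t = k *: t by apply: Mn_inj; rewrite -scalemxAl baer_pre.
case/(conj_fixed_Fvec hq t0) => w [Fw [w0 [mu [mu0 etw]]]].
exists w; do 2!split => //; exists (mu * lam^-1); split.
  by rewrite mulf_neq0 // invr_eq0.
by rewrite -(baer_pre X) -/t etw -scalemxAl M_Mn scalerA divfK.
Qed.

Lemma inC_of_inB X : inB q M X -> inCplus M c X -> inC q M c X.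
Proof.
case=> w [Fw [w0 [k [k0 eX]]]] [_ fX]; exists w; do 3!split => //; last by exists k.
move: fX; rewrite eX fplusZ fplus_M => /eqP.
by rewrite mulf_eq0 expf_eq0 (negbTE k0) => /eqP.
Qed.
Lemma inC_Cplus T : inC q M c T -> inCplus M c T.
Proof.
case=> t [Ft [t0 [qt [k [k0 eT]]]]]; split; last by rewrite eT fplusZ fplus_M qt mulr0.
by rewrite eT scaler_eq0 negb_or k0 /= M_Mn scaler_eq0 negb_or hlam Mn_eq0.
Qed.

Lemma CC_inf_iff p : (inCC q tau M c p /\ sinf p) <->
  exists T, inC q M c T /\ linf T /\ inSpread q tau T p /\ inBB q tau M p.
Proof.
split.
  case=> [[[X [_ [_ [k [k0 eb]]]]] | //]].
  by rewrite /sinf eb coZ /bbv co_row5 //= mulr1 => /eqP; rewrite (negbTE k0).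
case=> T [CT [lT [sT bT]]]; split; first by right; exists T.
by case: sT => w [_ [_ [[k [k0 ->]] [w4 _]]]]; rewrite /sinf coZ w4 mulr0.
Qed.


(* If P is on C^+ /\ l_inf but not in B, then its Baer image is Q, and for
   P = t Mn the point t N is the only point of N^* on the line P Q^q. *)
Lemma meets_transversal_line P Q : P != 0 -> linf P -> inCplus M c P -> ~ inB q M P ->
  linf Q -> (forall X, X != 0 -> linf X -> inCplus M c X -> peq X P \/ peq X Q) ->
  meets1 bbmat c (gpt q tau P) (vconj q (gpt q tau Q)).
Proof.
move=> P0 lP CP nBP lQ hX.
have [nz [lX' CX']] := baer_linf_Cplus P0 lP CP.
have [/(baer_fixed_inB P0) //|[k [k0 ek]]] := hX _ nz lX' CX'.
set t := P *m invmx Mn; have eP : t *m Mn = P := baer_pre P.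
have t0 : t != 0 by rewrite -Mn_eq0 eP.
have qt : qf c t = 0 by case: CP => _ /eqP; rewrite -eP fplus_Mn_eq0 => /eqP.
have tcE : t *m map_mx (cnj q) Mn = cnj q k *: vconj q Q.
  by rewrite -[t](vconjK hq) -(vconjM hq) -/(vconj q _) -/(baer P) ek /vconj vconjZ.
have dt0 := dtau_neq0 hq htau.
exists (t *m bbmat); split; first by exists t; do 2!split => //; exact: peq_refl.
split.
  split; first by rewrite bbmat_eq0.
  exists (tau - tq q tau)^-1, (cnj q k / (tq q tau - tau)).
  apply: (glue_inj hq htau).
  - by rewrite co_bbmat4 eP lP coD !coZ gpt_z (vgpt_z _ hq) !mulr0 addr0.
  - rewrite mul_bbmat_glue eP mulmxDl -!scalemxAl glue_gpt // (glue_vgpt _ hq).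
    by rewrite scaler0 addr0 scalerA mulVf ?scale1r.
  - rewrite mul_bbmat_glue_conj tcE mulmxDl -!scalemxAl glue_conj_gpt (glue_conj_vgpt _ hq) //.
    by rewrite scaler0 add0r scalerA divfK // subr_eq0 (tau_notF hq htau).
move=> Y [y [y0 [qy [k' [k'0 eY']]]]] [Y0 [a [b eY]]].
have eyt : y = (k'^-1 * a * (tau - tq q tau)) *: t.
  apply: Mn_inj; rewrite -scalemxAl eP -mul_bbmat_glue.
  have -> : y *m bbmat = k'^-1 *: Y by rewrite eY' scalerA mulVf // scale1r.
  rewrite -scalemxAl eY mulmxDl -!scalemxAl glue_gpt // (glue_vgpt _ hq).
  by rewrite scaler0 addr0 !scalerA.
have mu0 : k'^-1 * a * (tau - tq q tau) != 0.
  by apply: contraNneq y0 => h; rewrite eyt h scale0r.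
by rewrite eY' eyt -scalemxAl scalerA; apply: peqZ; rewrite mulf_neq0.
Qed.

Section TangentPoints.
Variables P Q : 'rV[K]_3.
Hypotheses (P0 : P != 0) (Q0 : Q != 0) (lP : linf P) (lQ : linf Q)
  (hPQ : forall X, X != 0 -> linf X -> (inCplus M c X <-> peq X P \/ peq X Q)).

Lemma P_on_Cplus : inCplus M c P.
Proof. by apply/(hPQ P0 lP); left; exact: peq_refl. Qed.
Lemma Q_on_Cplus : inCplus M c Q.
Proof. by apply/(hPQ Q0 lQ); right; exact: peq_refl. Qed.
Lemma Cplus_linf X : X != 0 -> linf X -> inCplus M c X -> peq X P \/ peq X Q.
Proof. by move=> X0 lX; case: (hPQ X0 lX). Qed.
Lemma Cplus_linf_sym X : X != 0 -> linf X -> inCplus M c X -> peq X Q \/ peq X P.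
Proof. by move=> X0 lX /(Cplus_linf X0 lX) []; [right | left]. Qed.
Lemma C_linf T : inC q M c T -> linf T -> peq T P \/ peq T Q.
Proof. by move=> CT lT; have [T0 _] := inC_Cplus CT; apply: Cplus_linf T0 lT (inC_Cplus CT). Qed.

(* [C^+] /\ Sigma_inf = [P] \/ [Q]: a GF(q)-point w of Sigma_inf is on [C^+]
   iff w glue(tau) is on C^+ /\ l_inf. *)
Lemma OO_inf_iff p : (inOO q tau M c p /\ sinf p) <-> (inSpread q tau P p \/ inSpread q tau Q p).
Proof.
split.
  case=> [[w [Fw [w0 [[k [k0 pw]] fw]]]] sp].
  have w4 : co w 4 = 0.
    by move: sp; rewrite /sinf pw coZ => /eqP; rewrite mulf_eq0 (negbTE k0) => /eqP.
  rewrite -mul_glue in fw.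
  have X0 := glue_nz hq htau Fw w0 w4.
  have lX : linf (w *m glue tau) by rewrite /linf mul_glue co_row3.
  have pw' : peq p w by exists k.
  by case: (Cplus_linf X0 lX (conj X0 fw)) => [[e [_ eX]]|[e [_ eX]]];
    [left | right]; exact: spread_glue eX.
have onO T : T != 0 -> linf T -> inCplus M c T -> inSpread q tau T p ->
    inOO q tau M c p /\ sinf p.
  move=> T0 lT [_ fT] [w [Fw [w0 [[k [k0 pw]] [w4 [e [e1 e2]]]]]]].
  split; last by rewrite /sinf pw coZ w4 mulr0.
  exists w; do 2!split => //; split; first by exists k.
  by rewrite -mul_glue (glue_spread lT w4 e1 e2) fplusZ fT mulr0.
by case=> [/(onO P P0 lP P_on_Cplus) | /(onO Q Q0 lQ Q_on_Cplus)].
Qed.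

Lemma conic_image : exists (N : 'M[K]_(3, 5)) (c' : 'rV[K]_6),
      Fconic4 q N c'
      /\ (forall p, inCC q tau M c p <-> inConic4 q N c' p)
      /\ (forall x : 'rV[K]_3, Fvec q x -> x != 0 -> inBB q tau M (x *m N))
      /\ (~ peq P Q -> ~ inB q M P -> ~ inB q M Q ->
            special q N c' (gpt q tau P) (gpt q tau Q)).
Proof.
exists bbmat, c; split; first by split; [exact: bbmat_inF | split; [exact: bbmat_free | exact: hc]].
split; first exact: inCC_iff.
split; first by move=> x Fx x0; apply/inBB_iff; exists x; do 2!split => //; exact: peq_refl.
move=> nPQ nBP nBQ; split.
  exact: meets_transversal_line P_on_Cplus nBP lQ Cplus_linf.
by apply/meets1_swap/(meets_transversal_line Q0 lQ Q_on_Cplus nBQ lP Cplus_linf_sym).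
Qed.

Lemma C_inf_point T : inB q M T -> inCplus M c T -> linf T ->
  exists t, Fvec q t /\ t != 0 /\ peq T (t *m M) /\
    forall p, (inSpread q tau T p /\ inBB q tau M p) <-> (p != 0 /\ peq p (t *m bbmat)).
Proof.
move=> BT CT lT; have [t [Ft [t0 [_ pT]]]] := inC_of_inB BT CT.
by exists t; do 3!split => //; move=> p; exact: point_BB_iff.
Qed.

Lemma tangent_case : peq P Q ->
  inB q M P /\ exists p0 : 'rV[K]_5,
    (forall p, (inSpread q tau P p /\ inBB q tau M p) <-> (p != 0 /\ peq p p0))
    /\ (forall p, (inCC q tau M c p /\ sinf p) <-> (p != 0 /\ peq p p0)).
Proof.
move=> ePQ.
have BP : inB q M P.
  have [nz [lX' CX']] := baer_linf_Cplus P0 lP P_on_Cplus.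
  apply: baer_fixed_inB => //.
  by case: (Cplus_linf nz lX' CX') => // h; apply: peq_trans h (peq_sym ePQ).
have [t [_ [_ [_ hpt]]]] := C_inf_point BP P_on_Cplus lP.
split => //; exists (t *m bbmat); split => // p; rewrite CC_inf_iff; split.
  case=> T [CT [lT [sT bT]]]; apply/hpt; split => //; apply: inSpread_peq sT.
  by case: (C_linf CT lT) => // h; apply: peq_trans h (peq_sym ePQ).
by case/hpt => sP bP; exists P; split; [exact: inC_of_inB BP P_on_Cplus | exact: (conj lP (conj sP bP))].
Qed.

Lemma secant_case : ~ peq P Q -> inB q M P -> inB q M Q ->
  exists p1 p2 : 'rV[K]_5, ~ peq p1 p2
    /\ (forall p, (inSpread q tau P p /\ inBB q tau M p) <-> (p != 0 /\ peq p p1))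
    /\ (forall p, (inSpread q tau Q p /\ inBB q tau M p) <-> (p != 0 /\ peq p p2))
    /\ (forall p, (inCC q tau M c p /\ sinf p) <-> (p != 0 /\ (peq p p1 \/ peq p p2))).
Proof.
move=> nPQ BP BQ.
have [t1 [_ [_ [pP hP]]]] := C_inf_point BP P_on_Cplus lP.
have [t2 [_ [_ [pQ hQ]]]] := C_inf_point BQ Q_on_Cplus lQ.
exists (t1 *m bbmat), (t2 *m bbmat); split.
  case=> k [k0 ek]; apply: nPQ.
  have e : t1 = k *: t2 by apply: bbmat_inj; rewrite ek scalemxAl.
  apply: peq_trans pP _; apply: peq_trans _ (peq_sym pQ).
  by rewrite e -scalemxAl; exact: peqZ.
do 2!split => //; move=> p; rewrite CC_inf_iff; split.
  case=> T [CT [lT [sT bT]]].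
  case: (C_linf CT lT) => h.
    by have [p0 pp] := (hP p).1 (conj (inSpread_peq h sT) bT); split => //; left.
  by have [p0 pp] := (hQ p).1 (conj (inSpread_peq h sT) bT); split => //; right.
case=> p0 [h|h].
  by have [sP bP] := (hP p).2 (conj p0 h); exists P; split; [exact: inC_of_inB BP P_on_Cplus | exact: (conj lP (conj sP bP))].
by have [sQ bQ] := (hQ p).2 (conj p0 h); exists Q; split; [exact: inC_of_inB BQ Q_on_Cplus | exact: (conj lQ (conj sQ bQ))].
Qed.
End TangentPoints.
End Normalized.
End BruckBose.

Theorem theorem5p3 (K : finFieldType) (q : nat) (tau : K)
  (M : 'M[K]_3) (c : 'rV[K]_6) (P Q : 'rV[K]_3) :
  #|K| = (q ^ 2)%N ->
  (q ^ 2 - 1)%N.-primitive_root tau ->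
  M \in unitmx ->
  Fconic q c ->
  secant q M ->
  P != 0 -> Q != 0 -> linf P -> linf Q ->
  (forall X : 'rV[K]_3, X != 0 -> linf X -> (inCplus M c X <-> peq X P \/ peq X Q)) ->
  (exists (N : 'M[K]_(3,5)) (c' : 'rV[K]_6),
      Fconic4 q N c'
      /\ (forall p, inCC q tau M c p <-> inConic4 q N c' p)
      /\ (forall x : 'rV[K]_3, Fvec q x -> x != 0 -> inBB q tau M (x *m N))
      /\ (~ peq P Q -> ~ inB q M P -> ~ inB q M Q ->
            special q N c' (gpt q tau P) (gpt q tau Q)))
  /\ (forall p, (inOO q tau M c p /\ sinf p) <-> (inSpread q tau P p \/ inSpread q tau Q p))
  /\ (peq P Q ->
        inB q M P /\
        exists p0 : 'rV[K]_5,
          (forall p, (inSpread q tau P p /\ inBB q tau M p) <-> (p != 0 /\ peq p p0))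
          /\ (forall p, (inCC q tau M c p /\ sinf p) <-> (p != 0 /\ peq p p0)))
  /\ (~ peq P Q -> inB q M P -> inB q M Q ->
        exists p1 p2 : 'rV[K]_5, ~ peq p1 p2
          /\ (forall p, (inSpread q tau P p /\ inBB q tau M p) <-> (p != 0 /\ peq p p1))
          /\ (forall p, (inSpread q tau Q p /\ inBB q tau M p) <-> (p != 0 /\ peq p p2))
          /\ (forall p, (inCC q tau M c p /\ sinf p) <->
                        (p != 0 /\ (peq p p1 \/ peq p p2)))).
Proof.
move=> hq htau hM hc hsec P0 Q0 lP lQ hPQ.
have [lam [m [hlam [hm hzcol]]]] := secant_zcol_Fq hq hM hsec.
split; first exact (conic_image hq htau hM hc hlam hm hzcol P0 Q0 lP lQ hPQ).
split; first exact (OO_inf_iff hq htau P0 Q0 lP lQ hPQ).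
split; first exact (tangent_case hq htau hM hc hlam hm hzcol P0 lP hPQ).
exact (secant_case hq htau hM hlam hm hzcol P0 Q0 lP lQ hPQ).
Qed.
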